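(* Let $P$ be a finite nonzero measure on $\mathbb{R}^n$ and let $R \subseteq \mathbb{R}^+ \times \mathbb{R}^n$ be an exponential race with measure $P$. Define, for $x \in \mathbb{R}^n$, \[ G(x) = -\log \min\{T_i : (T_i, x) \in R\}, \] with the convention $\min \emptyset = \infty$ and $-\log \infty = -\infty$. Then $G$ is a Gumbel process with measure $P$.
   Context: A random countable subset $\Pi$ of a Euclidean space is a Poisson process with $\sigma$-finite nonatomic mean measure $\nu$ if (1) for every Borel $B$, $\#(\Pi\cap B) \sim \mathrm{Poisson}(\nu(B))$, and (2) for disjoint Borel $A_1,\ldots,A_m$, the counts $\#(\Pi\cap A_j)$ are independent. Let $\lambda$ be Lebesgue measure on $\mathbb{R}^+=(0,\infty)$. For a finite nonzero measure $P$ on $\mathbb{R}^n$, an exponential race with measure $P$ is a random countable subset $R \subseteq \mathbb{R}^+ \times \mathbb{R}^n$ that is a Poisson process with mean measure $\lambda \times P$, totally ordered by its first coordinate (time). A random variable $G$ is $\mathrm{Gumbel}(m)$ with location $m \in \mathbb{R}$ if $\mathbb{P}(G \le g) = \exp(-\exp(-g+m))$; $\mathrm{Gumbel}(-\infty)$ is the point mass at $-\infty$. A random function $G : \mathbb{R}^n \to \mathbb{R} \cup \{-\infty\}$ is a Gumbel process with measure $P$ if, writing $G^*(B) = \max_{x \in B} G(x)$: (1) for every Borel $B \subseteq \mathbb{R}^n$, the maximum $G^*(B)$ is well defined (attained) and $G^*(B) \sim \mathrm{Gumbel}(\log P(B))$; (2) for disjoint Borel $A_1, \ldots, A_m$, the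 random variables $G^*(A_i)$ are independent. *)

From HB Require Import structures.
From mathcomp Require Import all_boot all_order all_algebra.
From mathcomp Require Import all_classical all_reals all_analysis.
From mathcomp Require Import finmap measurable_realfun.
Set Implicit Arguments. Unset Strict Implicit. Unset Printing Implicit Defensive.
Import Order.TTheory GRing.Theory Num.Theory.
Import numFieldNormedType.Exports.
Local Open Scope classical_set_scope.
Local Open Scope ring_scope.

(* R^n is modelled as n.-tuple R, equipped by the library with the product
   sigma-algebra of the Borel sigma-algebras of R (= Borel sets of R^n). *)

Definition npoints (T : choiceType) (R : realType) (A : set T) : \bar R :=
  if pselect (finite_set A) then ((#|` fset_set A|%fset)%:R)%:E else +oo%E.

(* Poisson(mu) pmf, mu >= 0 (with 0^0 = 1, so Poisson(0) = point mass at 0) *)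
Definition poisson_pmf' (R : realType) (mu : R) (k : nat) : R :=
  mu ^+ k / (k`!)%:R * expR (- mu).

Definition poisson_law (R : realType) d (Om : measurableType d)
    (Pr : probability Om R) (mu : \bar R) (X : Om -> \bar R) : Prop :=
  match mu with
  | EFin r => forall k : nat, Pr [set w | X w = (k%:R)%:E] = (poisson_pmf' r k)%:E
  | +oo%E => Pr [set w | X w = +oo%E] = 1%E
  | -oo%E => False
  end.

Definition mutually_independent (R : realType) d (Om : measurableType d)
    (Pr : probability Om R) (m : nat) (X : 'I_m -> Om -> \bar R) : Prop :=
  (forall i, measurable_fun setT (X i)) /\
  forall E : 'I_m -> set (\bar R), (forall i, measurable (E i)) ->
    Pr (\bigcap_(i in [set: 'I_m]) (X i @^-1` E i)) =
    (\prod_(i < m) Pr (X i @^-1` E i))%E.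

Definition pos_region (R : realType) (n : nat) : set (R * n.-tuple R) :=
  `]0, +oo[%classic `*` [set: n.-tuple R].

(* Pi is an exponential race with measure P: a Poisson process on
   R^+ x R^n with mean measure (Lebesgue on R^+) x P *)
Definition exponential_race (R : realType) d (Om : measurableType d)
    (Pr : probability Om R) (n : nat)
    (P : {finite_measure set (n.-tuple R) -> \bar R})
    (Pi : Om -> set (R * n.-tuple R)) : Prop :=
  (forall w, countable (Pi w)) /\
  (forall w, Pi w `<=` @pos_region R n) /\
  (forall B : set (R * n.-tuple R), measurable B -> B `<=` @pos_region R n ->
     measurable_fun setT (fun w => @npoints _ R (Pi w `&` B)) /\
     poisson_law Pr ((@lebesgue_measure R \x P)%E B)
                    (fun w => @npoints _ R (Pi w `&` B))) /\
  (forall (m : nat) (A : 'I_m -> set (R * n.-tuple R)),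
     (forall i, measurable (A i)) -> (forall i, A i `<=` @pos_region R n) ->
     (forall i j, i != j -> A i `&` A j = set0) ->
     mutually_independent Pr (fun i w => @npoints _ R (Pi w `&` A i))).

Definition neglog (R : realType) (v : \bar R) : \bar R :=
  match v with
  | EFin r => if r <= 0 then +oo%E else (- ln r)%:E
  | +oo%E => -oo%E
  | -oo%E => +oo%E
  end.

(* G(x) = -log min { T : (T, x) in Pi } (min taken as infimum; inf of empty = +oo) *)
Definition race_G (R : realType) d (Om : measurableType d) (n : nat)
    (Pi : Om -> set (R * n.-tuple R)) (w : Om) (x : n.-tuple R) : \bar R :=
  neglog (ereal_inf [set t%:E | t in [set t : R | Pi w (t, x)]]).

Definition Gstar (R : realType) d (Om : measurableType d) (n : nat)
    (G : Om -> n.-tuple R -> \bar R) (B : set (n.-tuple R)) (w : Om) : \bar R :=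
  ereal_sup (G w @` B).

(* Gumbel(m) cdf, m in R \cup {-oo}; Gumbel(-oo) = point mass at -oo *)
Definition gumbel_cdf (R : realType) (m : \bar R) (g : R) : R :=
  match m with
  | EFin r => expR (- expR (- g + r))
  | -oo%E => 1
  | +oo%E => 0
  end.

Definition gumbel_law (R : realType) d (Om : measurableType d)
    (Pr : probability Om R) (m : \bar R) (X : Om -> \bar R) : Prop :=
  forall g : R, Pr [set w | (X w <= g%:E)%E] = (gumbel_cdf m g)%:E.

Definition logmeas (R : realType) (T : Type) (mu : set T -> \bar R) (B : set T)
  : \bar R :=
  if (0 < mu B)%E then (ln (fine (mu B)))%:E else -oo%E.

Definition gumbel_process (R : realType) d (Om : measurableType d)
    (Pr : probability Om R) (n : nat)
    (P : {finite_measure set (n.-tuple R) -> \bar R})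
    (G : Om -> n.-tuple R -> \bar R) : Prop :=
  (forall B : set (n.-tuple R), measurable B ->
     measurable_fun setT (Gstar G B) /\
     {ae Pr, forall w, B = set0 \/ exists2 x, B x & G w x = Gstar G B w} /\
     gumbel_law Pr (logmeas P B) (Gstar G B)) /\
  (forall (m : nat) (A : 'I_m -> set (n.-tuple R)),
     (forall i, measurable (A i)) ->
     (forall i j, i != j -> A i `&` A j = set0) ->
     mutually_independent Pr (fun i => Gstar G (A i))).

From HB Require Import structures.
From mathcomp Require Import all_boot all_order all_algebra.
From mathcomp Require Import all_classical all_reals all_analysis.
From mathcomp Require Import finmap measurable_realfun.
Set Implicit Arguments. Unset Strict Implicit. Unset Printing Implicit Defensive.
Import Order.TTheory GRing.Theory Num.Theory.
Local Open Scope classical_set_scope.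
Local Open Scope ring_scope.

(* The event {G*(B) <= g} is exactly the event that the race has no point in
   the window ]0, e^-g[ x B; by the Poisson property it has probability
   exp (- e^-g P(B)), the Gumbel(log P(B)) distribution function. For disjoint
   A_i the windows are disjoint, so the independence of the Poisson counts gives
   the product rule for the events {G*(A_i) <= g_i}; these lower rays form a
   pi-system generating the Borel sets of the extended reals, and a Dynkin
   argument, one coordinate at a time, extends the product rule to all Borel
   sets. The maximum is attained because almost surely every bounded window
   holds finitely many points, so there is an earliest point above B, and its
   location maximises G over B. *)

Lemma npoints_eq0 (T : choiceType) (R : realType) (A : set T) :
  @npoints T R A = 0%E <-> A = set0.
Proof.
rewrite /npoints; case: pselect => [fA|nfA]; split => //.
- move=> [] /eqP; rewrite pnatr_eq0 cardfs_eq0 => /eqP; exact: fset_set_set0.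
- by move=> A0; move: fA; rewrite A0 => fA; rewrite fset_set0 cardfs0.
- by move=> A0; exfalso; apply: nfA; rewrite A0.
Qed.

Lemma neglog_le (R : realType) (v : \bar R) (g : R) : (0 <= v)%E ->
  (neglog v <= g%:E)%E <-> ((expR (- g))%:E <= v)%E.
Proof.
case: v => [r| |] //= r0; last by split => _; rewrite ?leNye ?leey.
rewrite lee_fin in r0; case: ifPn => [r_le0|].
  have -> : r = 0 by apply/le_anti; rewrite r_le0 r0.
  by split => //; rewrite lee_fin leNgt expR_gt0.
rewrite -ltNge => r_gt0; rewrite !lee_fin.
by rewrite -{2}(@lnK _ r) ?posrE // ler_expR lerNl.
Qed.

Lemma exists_first_arrival (R : realType) (T : choiceType) (Q : set (R * T)) :
  (forall k : nat, finite_set (Q `&` [set p | p.1 < k.+1%:R])) ->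
  Q !=set0 -> exists2 p, Q p & forall q, Q q -> p.1 <= q.1.
Proof.
move=> Qfin [q0 Qq0].
pose S := Q `&` [set p | p.1 < (Num.truncn q0.1).+1%:R].
have Sfin : finite_set S := Qfin _.
have Sq0 : S q0 by split => //=; exact: truncnS_gt.
pose tmin := \big[Order.min/q0.1]_(p <- fset_set S) p.1.
have tmin_le q : S q -> tmin <= q.1.
  by move=> Sq; apply: ge_bigmin_seq => //; rewrite in_fset_set // mem_set.
have [p Sp tminE] : exists2 p, S p & tmin = p.1.
  rewrite /tmin big_seq; elim/big_ind: _ => [|a b|p]; first by exists q0.
  - move=> [p Sp ->] [p' Sp' ->]; rewrite /Order.min.
    by case: ifP => _; [exists p | exists p'].
  - by rewrite in_fset_set // => /set_mem Sp; exists p.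
exists p => [|q Qq]; first by case: Sp.
rewrite -tminE.
have [qS|qNS] := pselect (S q); first exact: tmin_le.
rewrite (le_trans (tmin_le _ Sq0)) // leNgt; apply/negP => q_lt.
by apply: qNS; split => //=; rewrite (lt_trans q_lt) // truncnS_gt.
Qed.

Definition window (R : realType) (T : Type) (c : R) (B : set T) : set (R * T) :=
  `]0, c[%classic `*` B.

Section race_pathwise.
Variables (R : realType) (d : measure_display) (Om : measurableType d) (n : nat).
Variables (Pi : Om -> set (R * n.-tuple R)) (w : Om).
Hypothesis Pi_pos : Pi w `<=` @pos_region R n.

Let arrivals x := [set t%:E | t in [set t : R | Pi w (t, x)]].

Lemma Pi_time_gt0 t x : Pi w (t, x) -> 0 < t.
Proof. by move=> /Pi_pos [/=]; rewrite in_itv /= andbT. Qed.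

Lemma race_G_le x g :
  (race_G Pi w x <= g%:E)%E <-> forall t, Pi w (t, x) -> expR (- g) <= t.
Proof.
rewrite /race_G neglog_le; last first.
  by apply/ereal_infP => _ [t /Pi_time_gt0 t_gt0 <-]; rewrite lee_fin ltW.
split => [/ereal_infP inf_ge t Ptx|ge_g].
  by rewrite -lee_fin; apply: inf_ge; exists t.
by apply/ereal_infP => _ [t Ptx <-]; rewrite lee_fin ge_g.
Qed.

Lemma race_G_ge t x : Pi w (t, x) -> ((- ln t)%:E <= race_G Pi w x)%E.
Proof.
move=> Ptx; have t_gt0 := Pi_time_gt0 Ptx.
have : (ereal_inf (arrivals x) <= t%:E)%E by apply: ereal_inf_lbound; exists t.
rewrite /race_G -/(arrivals x).
have : (0 <= ereal_inf (arrivals x))%E.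
  by apply/ereal_infP => _ [s /Pi_time_gt0 s_gt0 <-]; rewrite lee_fin ltW.
case: (ereal_inf _) => [r||] //= r_ge0; rewrite lee_fin => r_le_t.
case: ifPn => [_|]; first exact: leey.
by rewrite -ltNge lee_fin lerN2 => r_gt0; rewrite ler_ln ?posrE.
Qed.

Lemma Gstar_race_le B g : (Gstar (race_G Pi) B w <= g%:E)%E <->
  Pi w `&` window (expR (- g)) B = set0.
Proof.
split => [/ereal_supP G_le|no_arrival].
- apply/seteqP; split => // -[t x] [Ptx [/= t_lt Bx]].
  have /race_G_le /(_ t Ptx) := G_le _ (ex_intro2 _ _ x Bx erefl).
  by move: t_lt; rewrite in_itv /= leNgt => /andP[_ ->].
- apply/ereal_supP => _ [x Bx <-]; apply/race_G_le => t Ptx.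
  rewrite leNgt; apply/negP => t_lt.
  suff : (Pi w `&` window (expR (- g)) B) (t, x) by rewrite no_arrival.
  by split => //; split => //=; rewrite in_itv /= t_lt (Pi_time_gt0 Ptx).
Qed.

Lemma race_G_eqNy x : (forall t, ~ Pi w (t, x)) -> race_G Pi w x = -oo%E.
Proof.
move=> noPt; rewrite /race_G -/(arrivals x) (_ : arrivals x = set0) ?ereal_inf0 //.
by apply/seteqP; split => // y [t Ptx _]; case: (noPt t Ptx).
Qed.

Lemma Gstar_race_attained B :
  (forall k : nat, finite_set (Pi w `&` window k.+1%:R B)) ->
  B = set0 \/ exists2 x, B x & race_G Pi w x = Gstar (race_G Pi) B w.
Proof.
move=> window_fin; have [->|/set0P [x0 Bx0]] := eqVneq B set0; first by left.
right; pose Q := Pi w `&` (setT `*` B).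
have [Qne|Q0] := pselect (Q !=set0); last first.
  have Gy y : B y -> race_G Pi w y = -oo%E.
    by move=> By; apply: race_G_eqNy => t Pty; apply: Q0; exists (t, y).
  exists x0 => //; rewrite Gy //; apply/esym/le_anti; rewrite leNye andbT.
  by apply/ereal_supP => _ [y By <-]; rewrite Gy.
have Qfin k : finite_set (Q `&` [set p | p.1 < k.+1%:R]).
  apply: sub_finite_set (window_fin k) => -[t x] [[Ptx [_ Bx]] /= t_lt].
  by split => //; split => //=; rewrite in_itv /= t_lt (Pi_time_gt0 Ptx).
have [[t x] [Ptx [_ Bx]] t_min] := exists_first_arrival Qfin Qne.
(* G(x) <= G*(B) <= - ln t <= G(x) *)
exists x => //; apply/le_anti/andP; split; first by apply: ereal_sup_ubound; exists x.
apply: le_trans (race_G_ge Ptx); apply/Gstar_race_le.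
rewrite opprK lnK ?posrE ?(Pi_time_gt0 Ptx) //.
apply/seteqP; split => // -[s y] [Psy [/= + By]]; rewrite in_itv /= => /andP[_].
by rewrite ltNge (t_min (s, y)).
Qed.

End race_pathwise.

(* [setT] is included so that a coordinate can be switched off in the product
   rule of mutual independence. *)
Definition ereal_lrays (R : realType) : set (set \bar R) :=
  [set A | A = setT \/ exists r : R, A = `]-oo, r%:E]%classic].

Lemma measurable_ereal_lrays (R : realType) :
  @measurable _ (\bar R) = <<s @ereal_lrays R >>.
Proof.
apply/seteqP; split => A mA; last first.
  apply: (smallest_sub _ _ mA); first exact: sigma_algebra_measurable.
  by move=> _ [->|[r ->]] //; exact: emeasurable_itv.
have {}mA : (@ErealGenInftyO.G R).-sigma.-measurable A.
  by rewrite -ErealGenInftyO.measurableE.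
apply: (smallest_sub _ _ mA); first exact: smallest_sigma_algebra.
move=> _ [r ->].
have -> : `]-oo, r%:E[%classic =
    \bigcup_k `]-oo, (r - k.+1%:R^-1)%:E]%classic :> set (\bar R).
  apply/seteqP; split => x /=; rewrite in_itv /=.
  - case: x => [s| |] //; last first.
      by move=> _; exists 0%N => //=; rewrite in_itv /= leNye.
    rewrite lte_fin => /ltr_add_invr [k s_lt]; exists k => //=.
    by rewrite in_itv /= lee_fin lerBrDr ltW.
  - move=> [k _] /=; rewrite in_itv /= => /le_lt_trans; apply.
    by rewrite lte_fin ltrBlDr ltrDl invr_gt0.
apply: sigma_algebra_bigcup => k; apply: sub_sigma_algebra.
by right; exists (r - k.+1%:R^-1).
Qed.

Lemma setI_closed_ereal_lrays (R : realType) : setI_closed (@ereal_lrays R).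
Proof.
move=> _ _ [->|[r ->]] [->|[s ->]]; rewrite ?setTI ?setIT; try by left.
- by right; exists s.
- by right; exists r.
right; exists (Order.min r s); apply/seteqP; split => x /=; rewrite !in_itv /=.
  by move=> [xr xs]; rewrite EFin_min le_min xr xs.
by rewrite EFin_min le_min => /andP[].
Qed.

Lemma ereal_lray_measurable (R : realType) (S : set \bar R) :
  ereal_lrays S -> measurable S.
Proof. by move=> lrS; rewrite measurable_ereal_lrays; exact: sub_sigma_algebra. Qed.

Section independence.
Variables (R : realType) (d : measure_display) (Om : measurableType d).
Variable Pr : probability Om R.
Local Open Scope ereal_scope.

Lemma indep_setC (E A : set Om) : measurable E -> measurable A ->
  Pr (E `&` A) = Pr E * Pr A -> Pr (~` E `&` A) = Pr (~` E) * Pr A.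
Proof.
move=> mE mA indepEA.
have PrD : Pr (A `\` E) = Pr A - Pr (A `&` E).
  by apply: measureD => //; rewrite ltey_eq fin_num_measure.
rewrite setIC -setDE PrD setIC indepEA probability_setC //.
rewrite -(fineK (fin_num_measure Pr _ mE)) -(fineK (fin_num_measure Pr _ mA)).
by rewrite -!EFinM -EFinB mulrBl mul1r.
Qed.

Lemma indep_bigcup (F : (set Om)^nat) (A : set Om) :
  (forall k, measurable (F k)) -> measurable A -> trivIset setT F ->
  (forall k, Pr (F k `&` A) = Pr (F k) * Pr A) ->
  Pr (\bigcup_k F k `&` A) = Pr (\bigcup_k F k) * Pr A.
Proof.
move=> mF mA tF indepFA.
rewrite setI_bigcupl !measure_bigcup //; last 2 first.
- by move=> k _; exact: measurableI.
- exact: trivIset_setIr.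
transitivity (\sum_(k <oo | k \in setT) (fine (Pr A))%:E * Pr (F k)).
  apply: eq_eseriesr => k _; rewrite fineK ?fin_num_measure // muleC.
  exact: indepFA.
rewrite nneseriesZl; last by move=> k _; exact: measure_ge0.
by rewrite fineK ?fin_num_measure // muleC.
Qed.

Lemma indep_lrays_measurable (Y : Om -> \bar R) (A : set Om) :
  measurable_fun setT Y -> measurable A ->
  (forall S, @ereal_lrays R S -> Pr (Y @^-1` S `&` A) = Pr (Y @^-1` S) * Pr A) ->
  forall S, measurable S -> Pr (Y @^-1` S `&` A) = Pr (Y @^-1` S) * Pr A.
Proof.
move=> mY mA indep_lrays S mS.
have mYS B : measurable B -> measurable (Y @^-1` B).
  by move=> mB; rewrite -[X in measurable X]setTI; exact: mY.
pose Q := [set S | Pr (Y @^-1` S `&` A) = Pr (Y @^-1` S) * Pr A].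
rewrite measurable_ereal_lrays in mS.
apply: (dynkin_induction (P := Q) (measurable_ereal_lrays R)
  (@setI_closed_ereal_lrays R)) mS.
- by apply: indep_lrays; left.
- by move=> B /indep_lrays.
- by move=> B mB QB; rewrite /Q /= preimage_setC indep_setC //; exact: mYS.
- move=> F mF tF QF; rewrite /Q /= preimage_bigcup indep_bigcup //.
  + by move=> k; exact: mYS.
  + move/trivIsetP : tF => tF; apply/trivIsetP => i j _ _ ij.
    by rewrite -preimage_setI tF ?preimage_set0.
Qed.

End independence.

Section mutual_independence.
Variables (R : realType) (d : measure_display) (Om : measurableType d).
Variables (Pr : probability Om R) (m : nat) (X : 'I_m -> Om -> \bar R).
Hypothesis mX : forall i, measurable_fun setT (X i).
Local Open Scope ereal_scope.

Definition product_rule (E : 'I_m -> set \bar R) : Prop :=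
  Pr (\bigcap_(i in [set: 'I_m]) (X i @^-1` E i)) =
  \prod_(i < m) Pr (X i @^-1` E i).

Lemma product_rule_update (E : 'I_m -> set \bar R) (j : 'I_m) :
  (forall i, i != j -> measurable (E i)) ->
  (forall S, ereal_lrays S -> product_rule [eta E with j |-> S]) ->
  forall S, measurable S -> product_rule [eta E with j |-> S].
Proof.
move=> mE rule_lrays.
pose A := \bigcap_(i in [set: 'I_m] `\ j) (X i @^-1` E i).
pose PrA := \prod_(i < m | i != j) Pr (X i @^-1` E i).
have ruleE S : product_rule [eta E with j |-> S] <->
    Pr (X j @^-1` S `&` A) = Pr (X j @^-1` S) * PrA.
  rewrite /product_rule (bigcap_setD1 j) // (bigD1 j) //= eqxx.
  rewrite (eq_bigcapr (G := fun i => X i @^-1` E i)); last first.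
    by move=> i [_ /eqP /negbTE ->].
  by rewrite (eq_bigr (fun i => Pr (X i @^-1` E i))) // => i /negbTE ->.
have mA : measurable A.
  apply: fin_bigcap_measurable => [|i [_ /eqP ij]]; first exact: finite_finset.
  by rewrite -[X in measurable X]setTI; apply: mX => //; exact: mE.
have PrAE : Pr A = PrA.
  have /ruleE := rule_lrays setT (or_introl erefl).
  by rewrite preimage_setT setTI probability_setT mul1e.
move=> S mS; apply/ruleE; rewrite -PrAE.
apply: indep_lrays_measurable => // S' lrS'; rewrite PrAE.
exact/ruleE/rule_lrays.
Qed.

Lemma mutually_independent_lrays :
  (forall E, (forall i, ereal_lrays (E i)) -> product_rule E) ->
  mutually_independent Pr X.
Proof.
move=> rule_lrays; split => // E mE.
suff rule_from k : (k <= m)%N -> forall E,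
    (forall i, measurable (E i)) ->
    (forall i : 'I_m, (k <= i)%N -> ereal_lrays (E i)) -> product_rule E.
  by apply: (rule_from m) => // i; rewrite leqNgt ltn_ord.
elim: k => [_ E' _ lrE'|k IH km E' mE' lrE'].
  by apply: rule_lrays => i; exact: lrE'.
pose k' : 'I_m := Ordinal km.
have -> : E' = [eta E' with k' |-> E' k'].
  by apply/funext => i /=; case: eqP => // ->.
apply: product_rule_update => // S lrS; apply: IH (ltnW km) _ _ _ => i /=.
  by case: eqP => _; [exact: ereal_lray_measurable | exact: mE'].
case: eqP => // /eqP ik ki; apply: lrE'.
rewrite ltn_neqAle ki andbT eq_sym; apply: contra ik => /eqP ik.
exact/eqP/val_inj.
Qed.

End mutual_independence.

Lemma poisson_pmf'_ge0 (R : realType) (r : R) k : 0 <= r -> 0 <= poisson_pmf' r k.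
Proof. by move=> r_ge0; rewrite mulr_ge0 ?divr_ge0 ?exprn_ge0 ?expR_ge0. Qed.

Lemma nneseries_poisson_pmf' (R : realType) (r : R) : 0 <= r ->
  (\sum_(k <oo) (poisson_pmf' r k)%:E = 1)%E.
Proof.
rewrite le_eqVlt => /predU1P[<-|r_gt0].
  rewrite nneseries_recl // => [|k _]; last by rewrite lee_fin poisson_pmf'_ge0.
  rewrite eseries0 ?adde0 => [|[|k] // _ _]; last first.
    by rewrite /poisson_pmf' expr0n /= !mul0r.
  by rewrite /poisson_pmf' expr0 fact0 divr1 oppr0 expR0 mul1r.
transitivity (\sum_(k <oo) (poisson_pmf r k)%:E)%E.
  by apply: eq_eseriesr => k _; rewrite /poisson_pmf r_gt0.
rewrite nneseries_esumT => [|k]; last by rewrite lee_fin poisson_pmf_ge0.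
by rewrite -(probability_setT (poisson_prob r 0%N)) /= /poisson_prob r_gt0.
Qed.

Section poisson_law.
Variables (R : realType) (d : measure_display) (Om : measurableType d).
Variables (Pr : probability Om R) (r : R) (X : Om -> \bar R).
Hypothesis X_poisson : poisson_law Pr r%:E X.

Lemma poisson_law_eq0 : Pr [set w | X w = 0%E] = (expR (- r))%:E.
Proof.
by have := X_poisson 0%N; rewrite mulr0n /poisson_pmf' expr0 fact0 divr1 mul1r.
Qed.

Lemma poisson_law_eqy : 0 <= r -> (forall v, measurable [set w | X w = v]) ->
  Pr [set w | X w = +oo%E] = 0%E.
Proof.
move=> r_ge0 mX; pose V := \bigcup_k [set w | X w = (k%:R)%:E].
have mV : measurable V by apply: bigcupT_measurable => k.
have PrV : Pr V = 1%E.
  rewrite measure_bigcup //; last first.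
    apply/trivIsetP => i j _ _ ij; apply/seteqP; split => // w [/= -> ].
    by move=> [] /eqP; rewrite eqr_nat (negbTE ij).
  rewrite -(nneseries_poisson_pmf' r_ge0).
  rewrite (eq_eseriesl _ _ (Q := xpredT)) => [|k]; last by rewrite in_setT.
  by apply: eq_eseriesr => k _; exact: X_poisson.
apply: (subset_measure0 _ (measurableC mV)) => //.
  by move=> w /= Xw [k _ /=]; rewrite Xw.
by apply: eq_trans (probability_setC Pr mV) _; rewrite PrV subee.
Qed.

End poisson_law.

Lemma measurable_window (R : realType) d (T : measurableType d) (c : R) (B : set T) :
  measurable B -> measurable (window c B).
Proof. by move=> mB; apply: measurableX => //; exact: measurable_itv. Qed.

Lemma window_pos_region (R : realType) n (c : R) (B : set (n.-tuple R)) :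
  window c B `<=` @pos_region R n.
Proof.
move=> [t x] [/= + _]; rewrite !in_itv /= => /andP[t_gt0 _].
by split => //=; rewrite in_itv /= t_gt0.
Qed.

Lemma product_measure_window (R : realType) d (T : measurableType d)
    (P : {sigma_finite_measure set T -> \bar R}) (c : R) (B : set T) :
  0 <= c -> measurable B ->
  ((@lebesgue_measure R \x P) (window c B) = c%:E * P B)%E.
Proof.
move=> c_ge0 mB; rewrite product_measure1E //.
have := @lebesgue_measure_itv R `]0, c[; rewrite /= lte_fin => ->.
by case: ltgtP c_ge0 => // [c_gt0 _|<- _]; rewrite ?sube0 ?mul0e.
Qed.

Section exponential_race.
Variables (R : realType) (d : measure_display) (Om : measurableType d).
Variables (Pr : probability Om R) (n : nat).
Variable P : {finite_measure set (n.-tuple R) -> \bar R}.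
Variable Pi : Om -> set (R * n.-tuple R).
Hypothesis race : exponential_race Pr P Pi.

Let count (S : set (R * n.-tuple R)) w := @npoints _ R (Pi w `&` S).
Let G := race_G Pi.
Let race_window c B (mB : measurable B) :=
  race.2.2.1 _ (measurable_window c mB) (@window_pos_region _ _ c B).

Lemma measurable_count_window c B : measurable B ->
  measurable_fun setT (count (window c B)).
Proof. by move=> mB; exact: (race_window c mB).1. Qed.

Lemma measurable_count_window_eq c B v : measurable B ->
  measurable [set w | count (window c B) w = v].
Proof.
move=> mB; rewrite -[X in measurable X]setTI.
exact: measurable_count_window mB measurableT _ (emeasurable_set1 v).
Qed.

Lemma poisson_law_count_window c B : 0 <= c -> measurable B ->
  poisson_law Pr (c * fine (P B))%:E (count (window c B)).
Proof.
move=> c_ge0 mB; have := (race_window c mB).2.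
by rewrite (@product_measure_window R _ _ P c B) // EFinM fineK ?fin_num_measure.
Qed.

Lemma Gstar_le_event B g : [set w | (Gstar G B w <= g%:E)%E] =
  [set w | count (window (expR (- g)) B) w = 0%E].
Proof.
apply/seteqP; split => w /=.
- by move/(Gstar_race_le (race.2.1 w)) => /npoints_eq0.
- by move/npoints_eq0/(Gstar_race_le (race.2.1 w)).
Qed.

Lemma measurable_Gstar B : measurable B -> measurable_fun setT (Gstar G B).
Proof.
move=> mB; apply: (measurability (@ereal_lrays R)); first exact: measurable_ereal_lrays.
move=> _ [S [->|[r ->]] <-]; first by rewrite preimage_setT setTI.
rewrite (_ : _ `&` _ = [set w | (Gstar G B w <= r%:E)%E]).
  by rewrite Gstar_le_event; exact: measurable_count_window_eq.
by apply/seteqP; split => w /=; rewrite in_itv /= => -[].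
Qed.

Lemma gumbel_law_Gstar B : measurable B -> gumbel_law Pr (logmeas P B) (Gstar G B).
Proof.
move=> mB g; rewrite Gstar_le_event.
rewrite (poisson_law_eq0 (poisson_law_count_window (expR_ge0 _) mB)).
rewrite /gumbel_cdf /logmeas; case: ifPn => [PB_gt0|].
  have PB_gt0' : 0 < fine (P B) by rewrite -lte_fin fineK ?fin_num_measure.
  by rewrite expRD lnK ?posrE // mulrC.
rewrite -leNgt => PB_le0.
have -> : P B = 0%E by apply/le_anti; rewrite PB_le0 measure_ge0.
by rewrite /= mulr0 oppr0 expR0.
Qed.

Lemma Gstar_attained_ae B : measurable B ->
  {ae Pr, forall w, B = set0 \/ exists2 x, B x & G w x = Gstar G B w}.
Proof.
move=> mB; have : \forall w \ae Pr, forall k : nat,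
    finite_set (Pi w `&` window k.+1%:R B).
  apply: ae_foralln => k; exists [set w | count (window k.+1%:R B) w = +oo%E].
  split.
  - exact: measurable_count_window_eq.
  - apply: poisson_law_eqy (poisson_law_count_window _ mB) _ _ => //.
      by rewrite mulr_ge0 ?fine_ge0 ?measure_ge0.
    by move=> v; exact: measurable_count_window_eq.
  - by move=> w /= Nfin; rewrite /count /npoints; case: pselect.
by apply: filterS => w; apply: Gstar_race_attained; exact: race.2.1.
Qed.

Lemma Gstar_lray_preimage B S : ereal_lrays S -> exists cF : R * set \bar R,
  [/\ 0 <= cF.1, measurable cF.2 &
       Gstar G B @^-1` S = count (window cF.1 B) @^-1` cF.2].
Proof.
case=> [->|[r ->]]; first by exists (1, setT); split; rewrite /= ?preimage_setT.
exists (expR (- r), [set 0%E]); split; [exact: expR_ge0 | exact: emeasurable_set1 |].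
transitivity [set w | (Gstar G B w <= r%:E)%E]; last by rewrite Gstar_le_event.
by apply/seteqP; split => w /=; rewrite in_itv.
Qed.

Lemma mutually_independent_Gstar m (A : 'I_m -> set (n.-tuple R)) :
  (forall i, measurable (A i)) -> (forall i j, i != j -> A i `&` A j = set0) ->
  mutually_independent Pr (fun i => Gstar G (A i)).
Proof.
move=> mA dA; apply: mutually_independent_lrays => [i|E lrE].
  exact: measurable_Gstar.
have /choice [cF cFP] i := Gstar_lray_preimage (A i) (lrE i).
have disj_windows i j : i != j ->
    window (cF i).1 (A i) `&` window (cF j).1 (A j) = set0.
  move=> ij; apply/seteqP; split => // -[t x] [[_ /= Ai] [_ /= Aj]].
  by move: (conj Ai Aj : (A i `&` A j) x); rewrite dA.
have [_ counts_indep] := race.2.2.2 m (fun i => window (cF i).1 (A i))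
  (fun i => measurable_window _ (mA i)) (fun i => @window_pos_region _ _ _ _)
  disj_windows.
have preimE i : Gstar G (A i) @^-1` E i =
    count (window (cF i).1 (A i)) @^-1` (cF i).2 by case: (cFP i).
rewrite /product_rule (eq_bigcapr (fun i _ => preimE i)).
rewrite counts_indep => [|i]; last by case: (cFP i).
by apply: eq_bigr => i _; rewrite preimE.
Qed.

End exponential_race.

Theorem theorem5 (R : realType) (d : measure_display) (Om : measurableType d)
    (Pr : probability Om R) (n : nat)
    (P : {finite_measure set (n.-tuple R) -> \bar R})
    (Pi : Om -> set (R * n.-tuple R)) :
  (0 < P setT)%E ->
  exponential_race Pr P Pi ->
  gumbel_process Pr P (race_G Pi).
Proof.
move=> _ race; split => [B mB | m A mA dA].
  split; first exact: (measurable_Gstar race mB).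
  by split; [exact: (Gstar_attained_ae race mB) | exact: (gumbel_law_Gstar race mB)].
exact: (mutually_independent_Gstar race mA dA).
Qed.
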